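(* Let $p\in\mathcal{X}$. If $q_1,q_2\in\mathcal{X}$ are two pathless polynomials with $p\equiv q_1\pmod{\mathcal{J}}$ and $p\equiv q_2\pmod{\mathcal{J}}$, then $D(q_1)=D(q_2)$. In other words, for pathless $q$ with $p\equiv q\pmod{\mathcal J}$, the value $D(q)$ depends only on $\alpha$, $\beta$ and $p$, not on the choice of $q$.
   Context: Let $\mathbf{k}$ be a commutative ring, let $\beta,\alpha\in\mathbf{k}$, and let $n$ be a positive integer; write $[m]=\{1,2,\dots,m\}$. Let $\mathcal{X}=\mathbf{k}[x_{i,j}\mid 1\le i<j\le n]$ be the polynomial ring over $\mathbf{k}$ in the $n(n-1)/2$ indeterminates $x_{i,j}$, and let $\mathfrak{M}$ be the set of monomials (without coefficients) in these indeterminates. Let $\mathcal{J}$ be the ideal of $\mathcal{X}$ generated by all elements $x_{i,j}x_{j,k}-x_{i,k}(x_{i,j}+x_{j,k}+\beta)-\alpha$ for $1\le i<j<k\le n$. A monomial $\mathfrak{m}\in\mathfrak{M}$ is pathless if there is no triple $(i,j,k)$ with $1\le i<j<k\le n$ and $x_{i,j}x_{j,k}\mid\mathfrak{m}$. A polynomial in $\mathcal{X}$ is pathless if it is a $\mathbf{k}$-linear combination of pathless monomials. Let $\mathcal{T}'=\mathbf{k}[t_1,\dots,t_{n-1}]$ and let $D:\mathcal{X}\to\mathcal{T}'$ be the $\mathbf{k}$-algebra homomorphism with $D(x_{i,j})=t_i$ for all $1\le i<j\le n$. *)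

From HB Require Import structures.
From mathcomp Require Import all_boot all_order all_algebra.
Set Implicit Arguments. Unset Strict Implicit. Unset Printing Implicit Defensive.
Import GRing.Theory.
Local Open Scope ring_scope.

Definition fpoly (k : Type) (M : Type) := seq (k * M).

Definition pcoef (k : pzSemiRingType) (M : eqType) (p : fpoly k M) (m : M) : k :=
  \sum_(t <- p | t.2 == m) t.1.

(* the indeterminates x_{i,j}, 1 <= i < j <= n (0-based: i < j < n) *)
Definition var (n : nat) := {ij : 'I_n * 'I_n | (ij.1 < ij.2)%N}.

Definition mon (n : nat) := {ffun var n -> nat}.

Definition xpoly (k : Type) (n : nat) := fpoly k (mon n).

Definition mon1 (n : nat) : mon n := [ffun => 0%N].
Definition monM (n : nat) (m1 m2 : mon n) : mon n := [ffun v => (m1 v + m2 v)%N].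
Definition monX (n : nat) (v : var n) : mon n := [ffun w => (w == v : nat)].

Section Ops.
Variables (k : comPzRingType) (n : nat).
Definition pC (c : k) : xpoly k n := [:: (c, mon1 n)].
Definition pAdd (p q : xpoly k n) : xpoly k n := p ++ q.
Definition pOpp (p : xpoly k n) : xpoly k n := [seq (- t.1, t.2) | t <- p].
Definition pSub (p q : xpoly k n) : xpoly k n := pAdd p (pOpp q).
Definition pMul (p q : xpoly k n) : xpoly k n :=
  [seq (a.1 * b.1, monM a.2 b.2) | a <- p, b <- q].
(* the variable x_{i,j} (for i < j; zero otherwise, never used then) *)
Definition xv (i j : 'I_n) : xpoly k n :=
  if @insub _ (fun ij : 'I_n * 'I_n => (ij.1 < ij.2)%N) (var n) (i, j) is Some v
  then [:: (1, monX v)] else [::].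

Definition genJ (beta alpha : k) (i j l : 'I_n) : xpoly k n :=
  pSub (pSub (pMul (xv i j) (xv j l))
             (pMul (xv i l) (pAdd (pAdd (xv i j) (xv j l)) (pC beta))))
       (pC alpha).

Definition inJ (beta alpha : k) (r : xpoly k n) : Prop :=
  exists s : seq (xpoly k n * ('I_n * 'I_n * 'I_n)),
    all (fun t : xpoly k n * ('I_n * 'I_n * 'I_n) => (t.2.1.1 < t.2.1.2)%N && (t.2.1.2 < t.2.2)%N) s /\
    forall m : mon n,
      pcoef r m =
      pcoef (flatten [seq pMul t.1 (genJ beta alpha t.2.1.1 t.2.1.2 t.2.2) | t : xpoly k n * ('I_n * 'I_n * 'I_n) <- s]) m.

Definition congJ (beta alpha : k) (p q : xpoly k n) : Prop := inJ beta alpha (pSub p q).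

(* exponent of x_{i,j} in m (0 if not i < j) *)
Definition expo (m : mon n) (i j : 'I_n) : nat :=
  if @insub _ (fun ij : 'I_n * 'I_n => (ij.1 < ij.2)%N) (var n) (i, j) is Some v
  then m v else 0%N.

Definition pathless_mon (m : mon n) : Prop :=
  forall i j l : 'I_n, (i < j)%N -> (j < l)%N ->
    ~ ((0 < expo m i j)%N /\ (0 < expo m j l)%N).

Definition pathless (q : xpoly k n) : Prop :=
  forall m : mon n, pcoef q m != 0 -> pathless_mon m.

(* T' = k[t_1, ..., t_{n-1}]; 0-based t_0..t_{n-2} *)
Definition tmon := {ffun 'I_n.-1 -> nat}.

(* D(x_{i,j}) = t_i, extended multiplicatively on monomials *)
Definition Dmon (m : mon n) : tmon :=
  [ffun a : 'I_n.-1 => \sum_(v : var n | nat_of_ord (sval v).1 == nat_of_ord a) m v].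

Definition Dpoly (q : xpoly k n) : fpoly k tmon := [seq (t.1, Dmon t.2) | t <- q].
End Ops.

(* Fix a monomial u of T'.  We build a k-linear form on X that kills every element of J
   occurring in the two given ideal memberships and takes the value [D m = u] on every
   pathless monomial m; applying it to p - q1 and p - q2 gives the claim.

   Put T_v = y_v y_(v+1) ... y_(n-1) in k[y_0, ..., y_(n-1)] and P(t) = t^2 + beta t + alpha.
   The rational functions x_(i,j) := T_i + P(T_i) / (T_j - T_i) satisfy the defining
   relations of J.  Expanding 1 / (T_j - T_i) = T_j^-1 (1 + T_i/T_j + (T_i/T_j)^2 + ...)
   and truncating at order N gives polynomials T_j x_(i,j) that satisfy the relations
   (multiplied by suitable T's) up to monomials of degree >= N.  The form sends m to the
   coefficient of T^u = prod_a T_a^(u_a) in prod x_(i,j)^(m_(i,j)); for N large, monomials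
   of degree >= N never reach that coefficient.

   For pathless m no source of an edge of m is the sink of an edge of m.  Weight an
   exponent vector by the sum, over the sinks r of m, of (exponent of y_(r-1)) - (exponent
   of y_r).  Then T_i T_j has weight -1 and all other terms of T_j x_(i,j) have weight >= 0,
   so prod (T_i T_j)^(m_(i,j)) is the unique term of minimal weight -deg m, while
   T^u prod T_j^(m_(i,j)) has weight <= -deg m.  Hence the coefficient is 1 if
   T^u = prod T_i^(m_(i,j)), i.e. D m = u, and 0 otherwise. *)

From HB Require Import structures.
From mathcomp Require Import all_boot all_order all_algebra.
From mathcomp Require Import mpoly.
From mathcomp Require Import ring zify.
Set Implicit Arguments.
Unset Strict Implicit.
Unset Printing Implicit Defensive.
Import Order.TTheory GRing.Theory Num.Theory.
Local Open Scope ring_scope.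

Section TermLists.
Variables (k : comPzRingType) (M : eqType).
Implicit Types (p q : fpoly k M) (F G : M -> k).

Definition plin F p : k := \sum_(t <- p) t.1 * F t.2.

Lemma pcoef_cons (t : k * M) p m :
  pcoef (t :: p) m = (if t.2 == m then t.1 else 0) + pcoef p m.
Proof. by rewrite /pcoef big_cons; case: ifP; rewrite ?add0r. Qed.

Lemma plin_pcoef F p (S : seq M) : uniq S -> {subset map snd p <= S} ->
  plin F p = \sum_(m <- S) pcoef p m * F m.
Proof.
move=> uS; elim: p => [|t p IH] sub.
  by rewrite /plin big_nil big1 // => m _; rewrite /pcoef big_nil mul0r.
rewrite /plin big_cons -/(plin F p) IH; last by move=> x xp; apply: sub; rewrite inE xp orbT.
under [RHS]eq_bigr do rewrite pcoef_cons mulrDl.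
rewrite big_split /=; congr (_ + _).
have tS : t.2 \in S by apply: sub; rewrite inE eqxx.
rewrite (bigD1_seq t.2) //= eqxx big1 ?addr0 // => m /negbTE.
by rewrite eq_sym => ->; rewrite mul0r.
Qed.

Lemma eq_plin_pcoef F p q : (forall m, pcoef p m = pcoef q m) -> plin F p = plin F q.
Proof.
move=> E; set S := undup (map snd p ++ map snd q).
rewrite !(@plin_pcoef F _ S) ?undup_uniq //; first by apply: eq_bigr => m _; rewrite E.
all: by move=> x xs; rewrite mem_undup mem_cat xs ?orbT.
Qed.

Lemma eq_plin_supp F G p : (forall m, pcoef p m != 0 -> F m = G m) -> plin F p = plin G p.
Proof.
move=> FG; set S := undup (map snd p).
have sp : {subset map snd p <= S} by move=> x; rewrite mem_undup.
rewrite !(@plin_pcoef _ p S) ?undup_uniq //; apply: eq_bigr => m _.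
by have [->|/FG->] := eqVneq (pcoef p m) 0; rewrite ?mul0r.
Qed.

Lemma plin_cat F p q : plin F (p ++ q) = plin F p + plin F q.
Proof. exact: big_cat. Qed.

Lemma plin_flatten F (L : seq (fpoly k M)) : plin F (flatten L) = \sum_(p <- L) plin F p.
Proof.
elim: L => [|p L IH]; first by rewrite /plin !big_nil.
by rewrite big_cons -IH -plin_cat.
Qed.

Lemma pcoef_map_snd (M' : eqType) (f : M -> M') p u :
  pcoef [seq (t.1, f t.2) | t <- p] u = plin (fun m => (f m == u)%:R) p.
Proof.
rewrite /pcoef big_map big_mkcond; apply: eq_bigr => t _ /=.
by case: ifP; rewrite ?mulr1 ?mulr0.
Qed.

End TermLists.

Section XpolyTerms.
Variables (k : comPzRingType) (n : nat).
Implicit Types (p q : xpoly k n) (F : mon n -> k).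

Lemma plin_opp F p : plin F (pOpp p) = - plin F p.
Proof. by rewrite /plin /pOpp big_map -sumrN; apply: eq_bigr => t _; rewrite mulNr. Qed.

Lemma plin_sub F p q : plin F (pSub p q) = plin F p - plin F q.
Proof. by rewrite /pSub /pAdd plin_cat plin_opp. Qed.

Lemma plin_mul F p q :
  plin F (pMul p q) = \sum_(a <- p) a.1 * plin (fun m => F (monM a.2 m)) q.
Proof.
rewrite /plin /pMul big_allpairs_dep; apply: eq_bigr => a _.
by rewrite mulr_sumr; apply: eq_bigr => b _ /=; rewrite mulrA.
Qed.

Definition mkvar (i j : 'I_n) (ij : (i < j)%N) : var n :=
  exist (fun v : 'I_n * 'I_n => (v.1 < v.2)%N) (i, j) ij.

Lemma xvE (i j : 'I_n) (ij : (i < j)%N) : xv k i j = [:: (1, monX (mkvar ij))].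
Proof. by rewrite /xv insubT. Qed.

Lemma plin_genJ F (beta alpha : k) (i j l : 'I_n)
    (ij : (i < j)%N) (jl : (j < l)%N) (il : (i < l)%N) :
  let xij := monX (mkvar ij) in let xjl := monX (mkvar jl) in
  let xil := monX (mkvar il) in
  plin F (genJ beta alpha i j l) =
    F (monM xij xjl) - F (monM xil xij) - F (monM xil xjl)
    - beta * F (monM xil (mon1 n)) - alpha * F (mon1 n).
Proof.
rewrite /genJ !plin_sub !plin_mul (xvE ij) (xvE jl) (xvE il) /pAdd /pC /plin /=.
rewrite !big_cons !big_nil /=; ring.
Qed.

End XpolyTerms.

Definition eqmod (R : zmodType) (I : R -> Prop) (x y : R) := I (x - y).
Notation "x = y %[mod I ]" := (eqmod I x y) : ring_scope.

Section CongruenceModulo.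
Variables (R : comPzRingType) (I : R -> Prop).
Hypotheses (I0 : I 0) (ID : forall x y, I x -> I y -> I (x + y))
  (IN : forall x, I x -> I (- x)) (IMl : forall x y, I x -> I (y * x)).

Lemma eqmodxx x : x = x %[mod I].
Proof. by rewrite /eqmod subrr. Qed.

Lemma eqmod_sym x y : x = y %[mod I] -> y = x %[mod I].
Proof. by move=> h; rewrite /eqmod -opprB; apply: IN. Qed.

Lemma eqmod_trans x y z : x = y %[mod I] -> y = z %[mod I] -> x = z %[mod I].
Proof. by move=> xy yz; rewrite /eqmod -[x](subrK y) -addrA; apply: ID. Qed.

Lemma eqmodD x1 x2 y1 y2 :
  x1 = y1 %[mod I] -> x2 = y2 %[mod I] -> x1 + x2 = y1 + y2 %[mod I].
Proof. by move=> h1 h2; rewrite /eqmod opprD addrACA; apply: ID. Qed.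

Lemma eqmodN x y : x = y %[mod I] -> - x = - y %[mod I].
Proof. by move=> h; rewrite /eqmod -opprD; apply: IN. Qed.

Lemma eqmodM x1 x2 y1 y2 :
  x1 = y1 %[mod I] -> x2 = y2 %[mod I] -> x1 * x2 = y1 * y2 %[mod I].
Proof.
move=> h1 h2; rewrite /eqmod.
have -> : x1 * x2 - y1 * y2 = x2 * (x1 - y1) + y1 * (x2 - y2) by ring.
by apply: ID; apply: IMl.
Qed.

Lemma eqmodMl x y1 y2 : y1 = y2 %[mod I] -> x * y1 = x * y2 %[mod I].
Proof. exact: eqmodM (eqmodxx x). Qed.

Definition quadP (beta alpha t : R) := t * t + beta * t + alpha.

(* With a = T_i/T_j, b = T_j/T_l, c = T_l, and Ga, Gb, Gab inverses of 1 - a, 1 - b,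
   1 - ab modulo I: multiplying by (1 - a)(1 - b)(1 - ab) turns the claim into a
   polynomial identity. *)
Lemma relation_eqmod (beta alpha a b c Ga Gb Gab : R) :
  (1 - a) * Ga = 1 %[mod I] -> (1 - b) * Gb = 1 %[mod I] ->
  (1 - a * b) * Gab = 1 %[mod I] ->
  let Ti := a * b * c in let Tj := b * c in let Tl := c in
  let xij := Ti * Tj + quadP beta alpha Ti * Ga in
  let xjl := Tj * Tl + quadP beta alpha Tj * Gb in
  let xil := Ti * Tl + quadP beta alpha Ti * Gab in
  xij * xjl - xil * xij - xil * xjl * b - beta * xil * Tj - alpha * (Tj * Tl) = 0 %[mod I].
Proof.
move=> ha hb hab Ti Tj Tl xij xjl xil; set E := (X in X = 0 %[mod I]).
set u := 1 - a in ha *; set v := 1 - b in hb *; set w := 1 - a * b in hab *.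
have clear_den (T T' G d : R) : d * G = 1 %[mod I] ->
    (T * T' + quadP beta alpha T * G) * d = T * T' * d + quadP beta alpha T %[mod I].
  move=> hG; have -> : (T * T' + quadP beta alpha T * G) * d =
      T * T' * d + quadP beta alpha T * (d * G) by ring.
  by apply: eqmodD (eqmodxx _) _; rewrite -{2}[quadP _ _ _]mulr1; apply: eqmodMl.
pose F X1 X2 X3 := X1 * X2 * w - X3 * X1 * v - X3 * X2 * (u * b)
  - beta * X3 * (u * v * Tj) - alpha * (Tj * Tl) * (u * v * w).
have cleared : E * (u * v * w) = 0 %[mod I].
  have -> : E * (u * v * w) = F (xij * u) (xjl * v) (xil * w) by rewrite /E /F; ring.
  have -> : 0 = F (Ti * Tj * u + quadP beta alpha Ti) (Tj * Tl * v + quadP beta alpha Tj)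
                  (Ti * Tl * w + quadP beta alpha Ti).
    by rewrite /F /Ti /Tj /Tl /u /v /w /quadP; ring.
  have := clear_den Ti Tj Ga u ha; have := clear_den Tj Tl Gb v hb.
  have := clear_den Ti Tl Gab w hab; rewrite /F => h3 h2 h1.
  by repeat first [assumption | exact: eqmodxx
                  | apply: eqmodD | apply: eqmodN | apply: eqmodM].
have unit : (u * Ga) * (v * Gb) * (w * Gab) = 1 %[mod I].
  by rewrite -(mulr1 1) -{1}(mulr1 1); repeat apply: eqmodM.
rewrite -[E in E = _ %[mod I]]mulr1.
apply: eqmod_trans (eqmod_sym (eqmodMl E unit)) _.
have -> : E * (u * Ga * (v * Gb) * (w * Gab)) = E * (u * v * w) * (Ga * Gb * Gab) by ring.
by rewrite -(mul0r (Ga * Gb * Gab)); apply: eqmodM cleared (eqmodxx _).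
Qed.

End CongruenceModulo.

Section MonomialSupport.
Variables (R : nzRingType) (n : nat).
Implicit Types (P Q : 'X_{1..n} -> Prop) (p q : {mpoly R[n]}).

Definition supp_in P p := forall mu, p@_mu != 0 -> P mu.

Lemma supp_in0 P : supp_in P 0.
Proof. by move=> mu; rewrite mcoeff0 eqxx. Qed.

Lemma supp_inD P p q : supp_in P p -> supp_in P q -> supp_in P (p + q).
Proof.
move=> hp hq mu; rewrite mcoeffD.
by have [z|/hp//] := eqVneq p@_mu 0; rewrite z add0r => /hq.
Qed.

Lemma supp_inN P p : supp_in P p -> supp_in P (- p).
Proof. by move=> hp mu; rewrite mcoeffN oppr_eq0 => /hp. Qed.

Lemma sub_supp_in P Q p : (forall mu, P mu -> Q mu) -> supp_in P p -> supp_in Q p.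
Proof. by move=> PQ hp mu /hp /PQ. Qed.

Lemma supp_inM P Q (S : 'X_{1..n} -> Prop) p q :
  (forall a b, P a -> Q b -> S (a + b)%MM) -> supp_in P p -> supp_in Q q ->
  supp_in S (p * q).
Proof.
move=> PQS hp hq mu; rewrite -mcoeff_msupp => /msuppM_le /allpairsP[[a b] /= [ha hb ->]].
by apply: PQS; [apply: hp | apply: hq]; rewrite -mcoeff_msupp.
Qed.

Lemma supp_inX P mu : P mu -> supp_in P 'X_[mu].
Proof.
by move=> h nu; rewrite mcoeffX; case: (@eqP _ mu nu) => [<-|] //=; rewrite eqxx.
Qed.

Lemma supp_inC P c : P 0%MM -> supp_in P c%:MP.
Proof.
by move=> h nu; rewrite mcoeffC; case: (@eqP _ nu 0%MM) => [->|] //=; rewrite mulr0 eqxx.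
Qed.

Lemma supp_in_sum P (I : Type) (r : seq I) (F : I -> {mpoly R[n]}) :
  (forall i, supp_in P (F i)) -> supp_in P (\sum_(i <- r) F i).
Proof. by move=> h; apply: big_ind => //; [apply: supp_in0 | apply: supp_inD]. Qed.

End MonomialSupport.

Section Exponents.
Variable n : nat.
Implicit Types (i j l w : 'I_n) (m : mon n).

Definition mtail i : 'X_{1..n} := [multinom ((i <= w)%N : nat) | w < n].
Definition mseg i j : 'X_{1..n} := [multinom (((i <= w) && (w < j))%N : nat) | w < n].

Lemma mtail_split i j : (i <= j)%N -> mtail i = (mseg i j + mtail j)%MM.
Proof.
move=> ij; apply/mnmP => w; rewrite mnmDE !mnmE.
by case: (leqP j w) => jw; rewrite ?andbT ?andbF ?addn0 // (leq_trans ij jw).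
Qed.

Lemma mseg_split i j l : (i <= j)%N -> (j <= l)%N -> mseg i l = (mseg i j + mseg j l)%MM.
Proof.
move=> ij jl; apply/mnmP => w; rewrite mnmDE !mnmE.
case: (ltnP w j) => wj; rewrite ?andbT ?andbF.
  by rewrite (leq_trans wj jl) andbT addn0.
by rewrite (leq_trans ij wj).
Qed.

Lemma mdeg_mseg_gt0 i j : (i < j)%N -> (0 < mdeg (mseg i j))%N.
Proof. by move=> ij; rewrite mdegE (bigD1 i) //= mnmE leqnn ij addnC ltn_addl. Qed.

Lemma mdeg_mtail i : (mdeg (mtail i) <= n)%N.
Proof.
rewrite mdegE -[leqRHS](card_ord n) -sum1_card.
by apply: leq_sum => w _; rewrite mnmE leq_b1.
Qed.

Definition vsrc (v : var n) : 'I_n := (sval v).1.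
Definition vsnk (v : var n) : 'I_n := (sval v).2.

Lemma vsrc_lt_snk v : (vsrc v < vsnk v)%N. Proof. exact: (svalP v). Qed.

Lemma vsrc_lt_pred v : (vsrc v < n.-1)%N.
Proof. by have := vsrc_lt_snk v; have := ltn_ord (vsnk v); lia. Qed.

Definition mon_deg m : nat := \sum_v m v.

Definition msink m : 'X_{1..n} := (\sum_v mtail (vsnk v) *+ m v)%MM.

Lemma msink_monM m1 m2 : msink (monM m1 m2) = (msink m1 + msink m2)%MM.
Proof.
apply/mnmP => w; rewrite mnmDE /msink !mnm_sumE -big_split /=.
by apply: eq_bigr => v _; rewrite !mulmnE /monM ffunE mulnDr.
Qed.

Lemma msink_monX v : msink (monX v) = mtail (vsnk v).
Proof.
apply/mnmP => w; rewrite /msink mnm_sumE (bigD1 v) //= big1 ?addn0.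
  by rewrite mulmnE ffunE eqxx muln1.
by move=> x /negbTE xv; rewrite mulmnE ffunE xv muln0.
Qed.

Lemma msink_mon1 : msink (mon1 n) = 0%MM.
Proof.
by apply/mnmP => w; rewrite /msink mnm_sumE mnm0E big1 // => v _; rewrite mulmnE ffunE muln0.
Qed.

Lemma mdeg_msink m : (mdeg (msink m) <= n * mon_deg m)%N.
Proof.
rewrite /msink mdeg_sum /mon_deg big_distrr /=; apply: leq_sum => v _.
by rewrite mdegMn leq_mul2r mdeg_mtail orbT.
Qed.

Definition mtarget (u : tmon n) : 'X_{1..n} :=
  (\sum_a mtail (widen_ord (leq_pred n) a) *+ u a)%MM.

Lemma mtargetE u w : mtarget u w = (\sum_(a : 'I_n.-1) ((a <= w)%N : nat) * u a)%N.
Proof. by rewrite /mtarget mnm_sumE; apply: eq_bigr => a _; rewrite mulmnE mnmE mulnC. Qed.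

Lemma mtarget_inj : injective mtarget.
Proof.
move=> u1 u2 E; apply/ffunP => -[i lt_i].
elim/ltn_ind: i lt_i => i IH lt_i.
have lt_in : (i < n)%N by apply: leq_trans lt_i (leq_pred n).
have split u : mtarget u (Ordinal lt_in) =
    (u (Ordinal lt_i) + \sum_(a : 'I_n.-1 | (a < i)%N) u a)%N.
  rewrite mtargetE (bigD1 (Ordinal lt_i)) //= leqnn mul1n; congr (_ + _).
  rewrite big_mkcond [RHS]big_mkcond /=; apply: eq_bigr => b _.
  have -> : (b != Ordinal lt_i) = (val b != i) by [].
  by case: (ltngtP b i) => h; rewrite ?mul1n ?mul0n //= ?(leqNgt b i) ?h.
have := congr1 (fun mu : 'X_{1..n} => mu (Ordinal lt_in)) E; rewrite /= !split.
rewrite (eq_bigr (fun a => u2 a)) => [/addIn //|[b lt_b] /= lt_bi].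
exact: IH.
Qed.

Lemma mtarget_Dmon m : (\sum_v mtail (vsrc v) *+ m v)%MM = mtarget (Dmon m).
Proof.
apply/mnmP => w; rewrite mtargetE mnm_sumE.
under eq_bigr do rewrite mulmnE mnmE.
rewrite (partition_big (fun v => Ordinal (vsrc_lt_pred v)) xpredT) //=.
apply: eq_bigr => a _; rewrite /Dmon ffunE big_distrr /=.
by apply: eq_big => // v /eqP <-; rewrite mulnC.
Qed.

End Exponents.

Section Weight.
Variables (n : nat) (S : {set 'I_n}).
Implicit Types (mu : 'X_{1..n}) (i j : 'I_n).

Definition prev_exp mu (r : 'I_n) : nat :=
  if val r is r'.+1 then mu (insubd r r') else 0%N.

Definition weight mu : int := \sum_(r in S) ((prev_exp mu r)%:Z - (mu r)%:Z).

Lemma weightD mu1 mu2 : weight (mu1 + mu2)%MM = weight mu1 + weight mu2.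
Proof.
rewrite /weight -big_split /=; apply: eq_bigr => -[[|r] lt_r] _;
  by rewrite /prev_exp /= ?mnmDE !PoszD; ring.
Qed.

Lemma weight0 : weight 0%MM = 0.
Proof.
by rewrite /weight big1 // => -[[|r] lt_r] _; rewrite /prev_exp /= !mnm0E.
Qed.

Lemma weightMn mu e : weight (mu *+ e)%MM = weight mu * e%:Z.
Proof.
rewrite /weight mulr_suml; apply: eq_bigr => -[[|r] lt_r] _;
  by rewrite /prev_exp /= !mulmnE !PoszM mulrBl.
Qed.

Lemma weight_mtail i : weight (mtail i) = - (i \in S)%:Z.
Proof.
rewrite /weight (eq_bigr (fun r => - (r == i)%:Z)); last first.
  move=> r _; rewrite /prev_exp mnmE; case: r => [[|r'] lt_r] /=.
    have -> : (Ordinal lt_r == i) = (0 == i :> nat) by [].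
    by rewrite sub0r leqn0 eq_sym.
  rewrite mnmE insubdK; last exact: ltn_trans (ltnSn r') lt_r.
  have -> : (Ordinal lt_r == i) = (r'.+1 == i) by [].
  case: (ltngtP i r'.+1) => h.
  - by rewrite -ltnS h subrr.
  - by rewrite leqNgt (ltn_trans (ltnSn r') h).
  - by rewrite h ltnn.
rewrite sumrN; congr (- _).
case: (boolP (i \in S)) => iS; last first.
  by rewrite big1 // => r rS; case: eqP => // ri; rewrite -ri rS in iS.
by rewrite (bigD1 i) //= eqxx big1 ?addr0 // => r /andP[_ /negbTE ->].
Qed.

Lemma weight_mseg i j : (i <= j)%N ->
  weight (mseg i j) = weight (mtail i) - weight (mtail j).
Proof. by move=> ij; rewrite (mtail_split ij) weightD addrK. Qed.

Lemma weight_mtarget_le0 (u : tmon n) : weight (mtarget u) <= 0.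
Proof.
rewrite /mtarget (big_morph weight weightD weight0); apply: sumr_le0 => a _.
by rewrite weightMn weight_mtail mulNr oppr_le0.
Qed.

End Weight.

Section LeadingTerm.
Variables (R : comNzRingType) (n : nat) (S : {set 'I_n}).
Implicit Types (p q : {mpoly R[n]}) (c : int) (mu : 'X_{1..n}).

Definition lead_weight c p mu :=
  weight S mu = c /\ supp_in (fun nu => c < weight S nu) (p - 'X_[mu]).

Lemma lead_weight1 : lead_weight 0 1 0%MM.
Proof. by split; [apply: weight0 | rewrite mpolyX0 subrr; apply: supp_in0]. Qed.

Lemma lead_weightM c1 c2 p1 p2 mu1 mu2 :
  lead_weight c1 p1 mu1 -> lead_weight c2 p2 mu2 ->
  lead_weight (c1 + c2) (p1 * p2) (mu1 + mu2)%MM.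
Proof.
move=> [w1 s1] [w2 s2]; split; first by rewrite weightD w1 w2.
have -> : p1 * p2 - 'X_[mu1 + mu2] = (p1 - 'X_[mu1]) * (p2 - 'X_[mu2])
    + (p1 - 'X_[mu1]) * 'X_[mu2] + 'X_[mu1] * (p2 - 'X_[mu2]) by rewrite mpolyXD; ring.
have X1 : supp_in (fun nu => weight S nu = c1) ('X_[mu1] : {mpoly R[n]}) by apply: supp_inX.
have X2 : supp_in (fun nu => weight S nu = c2) ('X_[mu2] : {mpoly R[n]}) by apply: supp_inX.
by do 2?apply: supp_inD; apply: supp_inM; try eassumption; move=> a b ha hb;
  rewrite weightD; lia.
Qed.

Lemma lead_weight_prod (I : finType) (c : I -> int) (F : I -> {mpoly R[n]})
    (mu : I -> 'X_{1..n}) :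
  (forall i, lead_weight (c i) (F i) (mu i)) ->
  lead_weight (\sum_i c i) (\prod_i F i) (\sum_i mu i)%MM.
Proof.
move=> h; apply: (big_rec3 (fun a b d => lead_weight a b d)); first exact: lead_weight1.
by move=> i ? ? ? _; apply: lead_weightM.
Qed.

Lemma lead_weightX c p mu e :
  lead_weight c p mu -> lead_weight (c * e%:Z) (p ^+ e) (mu *+ e)%MM.
Proof.
move=> h; elim: e => [|e IH]; first by rewrite mulr0 expr0 mulm0n; apply: lead_weight1.
by rewrite exprSr mulmSr -addn1 PoszD mulrDr mulr1; apply: lead_weightM.
Qed.

End LeadingTerm.

Section Sinks.
Variable n : nat.
Implicit Types (m : mon n) (v : var n).

Definition sinks m : {set 'I_n} := [set r | [exists v, (0 < m v)%N && (vsnk v == r)]].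

Lemma vsnk_sinks m v : (0 < m v)%N -> vsnk v \in sinks m.
Proof. by move=> h; rewrite inE; apply/existsP; exists v; rewrite h eqxx. Qed.

Lemma vsrc_notin_sinks m v : pathless_mon m -> (0 < m v)%N -> vsrc v \notin sinks m.
Proof.
have expo_var w : expo m (vsrc w) (vsnk w) = m w.
  by rewrite /expo /vsrc /vsnk -surjective_pairing valK.
move=> pl h; rewrite inE; apply/existsP => -[w /andP[hw /eqP sw]].
apply: (pl (vsrc w) (vsrc v) (vsnk v)); first by rewrite -sw vsrc_lt_snk.
  exact: vsrc_lt_snk.
by rewrite -{1}sw !expo_var.
Qed.

Lemma weight_msink m : weight (sinks m) (msink m) = \sum_v - (m v)%:Z.
Proof.
rewrite /msink (big_morph _ (weightD _) (weight0 _)); apply: eq_bigr => v _.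
rewrite weightMn weight_mtail; have [->|h] := posnP (m v); first by rewrite mulr0 oppr0.
by rewrite vsnk_sinks // mulN1r.
Qed.

End Sinks.

Section Substitution.
Variables (k : comNzRingType) (beta alpha : k) (n N : nat).
Local Notation MP := {mpoly k[n]}.
Implicit Types (i j l : 'I_n) (p q : MP) (m : mon n) (u : tmon n).

Definition highdeg p := supp_in (fun mu => (N <= mdeg mu)%N) p.

Lemma highdeg_mull p q : highdeg p -> highdeg (q * p).
Proof.
apply: (supp_inM (P := fun _ => True)) => // a b _ hb.
by rewrite mdegD (leq_trans hb) ?leq_addl.
Qed.

Lemma highdeg_coef p mu : highdeg p -> (mdeg mu < N)%N -> p@_mu = 0.
Proof. by move=> hp; apply: contraTeq => /hp; rewrite -leqNgt. Qed.

Definition geom p : MP := \sum_(e < N) p ^+ e.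

Lemma geom_seg i j : (i < j)%N ->
  (1 - 'X_[mseg i j]) * geom 'X_[mseg i j] = 1 %[mod highdeg].
Proof.
move=> ij; rewrite /geom -opprB mulNr -subrX1 opprB /eqmod addrAC subrr add0r.
rewrite mpolyXn; apply: supp_inN; apply: supp_inX => /=.
by rewrite mdegMn -{1}(mul1n N) leq_mul2r mdeg_mseg_gt0 ?orbT.
Qed.

Definition tvar i : MP := 'X_[mtail i].

(* T_j x_(i,j), with 1 / (1 - T_i/T_j) truncated at order N; note T_i/T_j = 'X_[mseg i j]. *)
Definition xsubst i j : MP :=
  tvar i * tvar j + quadP beta%:MP alpha%:MP (tvar i) * geom 'X_[mseg i j].

Lemma xsubst_relation i j l : (i < j)%N -> (j < l)%N ->
  highdeg (xsubst i j * xsubst j l - xsubst i l * xsubst i j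
        - xsubst i l * xsubst j l * 'X_[mseg j l]
        - beta%:MP * xsubst i l * tvar j - alpha%:MP * (tvar j * tvar l)).
Proof.
move=> ij jl; have il := ltn_trans ij jl.
have eTj : tvar j = 'X_[mseg j l] * tvar l by rewrite /tvar (mtail_split (ltnW jl)) mpolyXD.
have eTi : tvar i = 'X_[mseg i j] * 'X_[mseg j l] * tvar l.
  by rewrite /tvar (mtail_split (ltnW ij)) mpolyXD -/(tvar j) eTj mulrA.
have eil : 'X_[mseg i l] = 'X_[mseg i j] * 'X_[mseg j l] :> MP.
  by rewrite (mseg_split (ltnW ij) (ltnW jl)) mpolyXD.
have := geom_seg il; rewrite eil => g_il.
have := relation_eqmod (supp_in0 _) (@supp_inD _ _ _) (@supp_inN _ _ _) highdeg_mull
  beta%:MP alpha%:MP (tvar l) (geom_seg ij) (geom_seg jl) g_il.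
by rewrite /eqmod subr0 /xsubst eTi eTj eil.
Qed.

Definition msubst m : MP := \prod_v xsubst (vsrc v) (vsnk v) ^+ m v.

Lemma msubst_monM m1 m2 : msubst (monM m1 m2) = msubst m1 * msubst m2.
Proof.
by rewrite /msubst -big_split; apply: eq_bigr => v _; rewrite ffunE exprD.
Qed.

Lemma msubst_monX v : msubst (monX v) = xsubst (vsrc v) (vsnk v).
Proof.
rewrite /msubst (bigD1 v) //= big1 ?mulr1; first by rewrite ffunE eqxx expr1.
by move=> w /negbTE wv; rewrite ffunE wv expr0.
Qed.

Lemma msubst_mon1 : msubst (mon1 n) = 1.
Proof. by rewrite /msubst big1 // => v _; rewrite ffunE expr0. Qed.

(* The coefficient of T^u in prod x_(i,j)^(m_(i,j)), the denominators T_j having been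
   moved into the exponent. *)
Definition subst_coef u m : k := (msubst m)@_(mtarget u + msink m).

Lemma subst_coef_genJ u mh i j l (ij : (i < j)%N) (jl : (j < l)%N) :
  (mdeg (mtarget u + (msink mh + (mtail j + mtail l))) < N)%N ->
  plin (fun m => subst_coef u (monM mh m)) (genJ beta alpha i j l) = 0.
Proof.
move=> small; have il := ltn_trans ij jl.
rewrite (plin_genJ _ _ _ ij jl il) /subst_coef.
rewrite !msubst_monM !msink_monM !msubst_monX !msink_monX msubst_mon1 msink_mon1 /=.
set M := (mtarget u + (msink mh + (mtail j + mtail l)))%MM in small *.
have shift d mu (X : MP) : M = (d + mu)%MM ->
    (msubst mh * X)@_mu = (msubst mh * (X * 'X_[d]))@_M.
  by move=> ->; rewrite mulrA mcoeffMX.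
have scale c (X : MP) : c * (msubst mh * X)@_M = (msubst mh * (c%:MP * X))@_M.
  by rewrite mulrCA mcoeffCM.
have sp := mtail_split (ltnW jl).
rewrite (shift (mseg j l) (mtarget u + (msink mh + (mtail l + mtail l)))%MM);
  last by apply/mnmP => w; rewrite /M sp !mnmDE; lia.
rewrite (shift (mtail j) (mtarget u + (msink mh + (mtail l + 0)))%MM);
  last by apply/mnmP => w; rewrite /M !mnmDE mnm0E; lia.
rewrite (shift (mtail j + mtail l)%MM (mtarget u + (msink mh + 0))%MM);
  last by apply/mnmP => w; rewrite /M !mnmDE mnm0E; lia.
rewrite [(mtail l + mtail j)%MM]addmC -/M !scale -!mcoeffB -!mulrBr.
apply: highdeg_coef small; apply: highdeg_mull.
rewrite mulr1 mul1r mpolyXD mulrA; exact: xsubst_relation.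
Qed.

Lemma lead_xsubst (S : {set 'I_n}) i j : (i < j)%N -> i \notin S -> j \in S ->
  lead_weight S (-1) (xsubst i j) (mtail i + mtail j)%MM.
Proof.
move=> ij iS jS; split; first by rewrite weightD !weight_mtail (negbTE iS) jS.
have -> : xsubst i j - 'X_[mtail i + mtail j] =
    quadP beta%:MP alpha%:MP (tvar i) * geom 'X_[mseg i j].
  by rewrite /xsubst mpolyXD /tvar; ring.
apply: (sub_supp_in (P := fun mu => 0 <= weight S mu)); first by move=> mu /= h; lia.
have nonnegM p q : supp_in (fun mu => 0 <= weight S mu) p ->
    supp_in (fun mu => 0 <= weight S mu) q -> supp_in (fun mu => 0 <= weight S mu) (p * q).
  by apply: supp_inM => a b ha hb; rewrite weightD addr_ge0.
have Ti : supp_in (fun mu => 0 <= weight S mu) (tvar i).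
  by apply: supp_inX; rewrite weight_mtail (negbTE iS) oppr0.
have C (c : k) : supp_in (fun mu => 0 <= weight S mu) c%:MP.
  by apply: supp_inC; rewrite weight0.
apply: (nonnegM).
- rewrite /quadP; apply: supp_inD; first apply: supp_inD.
  + exact: (nonnegM _ _ Ti Ti).
  + exact: nonnegM (C beta) Ti.
  + exact: C.
- apply: supp_in_sum => e; rewrite mpolyXn; apply: supp_inX.
  by rewrite weightMn weight_mseg ?(ltnW ij) // !weight_mtail (negbTE iS) jS.
Qed.

Lemma lead_msubst m : pathless_mon m ->
  lead_weight (sinks m) (\sum_v - (m v)%:Z) (msubst m)
    (\sum_v (mtail (vsrc v) + mtail (vsnk v)) *+ m v)%MM.
Proof.
move=> pm; apply: lead_weight_prod => v.
have [->|h] := posnP (m v); first by rewrite oppr0 expr0 mulm0n; apply: lead_weight1.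
rewrite -mulN1r; apply: lead_weightX; apply: lead_xsubst.
- exact: vsrc_lt_snk.
- exact: vsrc_notin_sinks.
- exact: vsnk_sinks.
Qed.

Lemma subst_coef_pathless u m : pathless_mon m -> subst_coef u m = (Dmon m == u)%:R.
Proof.
move=> pm; have [w_lead rest] := lead_msubst pm.
set mu0 := (\sum_v _)%MM in w_lead rest.
rewrite /subst_coef -[msubst m](subrK 'X_[mu0]) mcoeffD.
have -> : (msubst m - 'X_[mu0])@_(mtarget u + msink m) = 0.
  apply: contraTeq (weight_mtarget_le0 (sinks m) u) => /rest /=.
  by rewrite weightD weight_msink -ltNge -{1}[\sum_v _]add0r ltrD2r.
have -> : mu0 = (\sum_v mtail (vsrc v) *+ m v + msink m)%MM.
  apply/mnmP => w; rewrite /mu0 mnmDE /msink !mnm_sumE -big_split /=.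
  by apply: eq_bigr => v _; rewrite !mulmnE mnmDE mulnDl.
rewrite add0r mcoeffX eqm_add2r mtarget_Dmon.
by rewrite (inj_eq (@mtarget_inj _)).
Qed.

End Substitution.

Section Annihilation.
Variables (k : comNzRingType) (beta alpha : k) (n : nat).
Local Notation gen_term := (xpoly k n * ('I_n * 'I_n * 'I_n))%type.
Local Notation witness := (seq gen_term).

Definition witness_deg (s : witness) : nat :=
  \max_(t <- s) \max_(a <- t.1) mon_deg a.2.

Lemma subst_coef_witness N u (s : witness) :
  all (fun t : gen_term => (t.2.1.1 < t.2.1.2)%N && (t.2.1.2 < t.2.2)%N) s ->
  (mdeg (mtarget u) + n * witness_deg s + 2 * n < N)%N ->
  plin (subst_coef beta alpha N u)
    (flatten [seq pMul t.1 (genJ beta alpha t.2.1.1 t.2.1.2 t.2.2) | t <- s]) = 0.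
Proof.
move=> /allP hs hN; rewrite plin_flatten big_map big1_seq // => t /andP[_ ts].
have /andP[ij jl] := hs t ts; rewrite plin_mul big1_seq // => a /andP[_ ats].
rewrite subst_coef_genJ ?mulr0 // !mdegD; apply: leq_ltn_trans hN.
have deg_a : (mon_deg a.2 <= witness_deg s)%N.
  apply: leq_trans (@leq_bigmax_seq _ _ xpredT
    (fun t : gen_term => \max_(a <- t.1) mon_deg a.2) t ts isT).
  exact: (@leq_bigmax_seq _ _ xpredT (fun a : k * mon n => mon_deg a.2) a ats isT).
have deg_msink : (mdeg (msink a.2) <= n * witness_deg s)%N.
  by apply: leq_trans (mdeg_msink _) _; rewrite leq_mul2l deg_a orbT.
rewrite -addnA leq_add2l mul2n -addnn.
by apply: leq_add deg_msink (leq_add (mdeg_mtail _) (mdeg_mtail _)).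
Qed.

Lemma subst_coef_congJ (u : tmon n) (p q : xpoly k n) : congJ beta alpha p q ->
  exists N0, forall N, (N0 <= N)%N ->
    plin (subst_coef beta alpha N u) p = plin (subst_coef beta alpha N u) q.
Proof.
case=> s [hs e]; exists (mdeg (mtarget u) + n * witness_deg s + 2 * n).+1 => N hN.
by apply/eqP; rewrite -subr_eq0 -plin_sub (eq_plin_pcoef _ e) subst_coef_witness.
Qed.

Lemma pcoef_Dpoly_subst_coef N (u : tmon n) (q : xpoly k n) : pathless q ->
  pcoef (Dpoly q) u = plin (subst_coef beta alpha N u) q.
Proof.
move=> pl; rewrite pcoef_map_snd; apply: eq_plin_supp => m /pl pm.
by rewrite subst_coef_pathless.
Qed.

Lemma Dpoly_pathless_congJ (p q1 q2 : xpoly k n) : pathless q1 -> pathless q2 ->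
  congJ beta alpha p q1 -> congJ beta alpha p q2 ->
  forall u, pcoef (Dpoly q1) u = pcoef (Dpoly q2) u.
Proof.
move=> pl1 pl2 c1 c2 u.
have [N1 e1] := subst_coef_congJ u c1; have [N2 e2] := subst_coef_congJ u c2.
rewrite !(pcoef_Dpoly_subst_coef (maxn N1 N2)) //.
by rewrite -e1 ?leq_maxl // e2 ?leq_maxr.
Qed.

End Annihilation.

(* Multivariate polynomials need a nontrivial coefficient ring; over the zero ring the
   theorem is trivial. *)
Section NonzeroRing.
Variables (k : comPzRingType) (k_nz : (1 : k) != 0).

Definition nz_carrier : Type := k.
HB.instance Definition _ := GRing.ComPzRing.on nz_carrier.
HB.instance Definition _ := GRing.PzSemiRing_isNonZero.Build nz_carrier k_nz.

Lemma Dpoly_pathless_congJ_nz (beta alpha : k) n (p q1 q2 : xpoly k n) :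
  pathless q1 -> pathless q2 ->
  congJ beta alpha p q1 -> congJ beta alpha p q2 ->
  forall u, pcoef (Dpoly q1) u = pcoef (Dpoly q2) u.
Proof. exact: (@Dpoly_pathless_congJ nz_carrier). Qed.

End NonzeroRing.

Theorem theorem2p7 (k : comPzRingType) (beta alpha : k) (n : nat) (Hn : (0 < n)%N)
  (p q1 q2 : xpoly k n) :
  pathless q1 -> pathless q2 ->
  congJ beta alpha p q1 -> congJ beta alpha p q2 ->
  forall u : tmon n, pcoef (Dpoly q1) u = pcoef (Dpoly q2) u.
Proof.
have [k0|k_nz] := eqVneq (1 : k) 0; last exact: Dpoly_pathless_congJ_nz.
by move=> *; rewrite -[LHS]mulr1 -[RHS]mulr1 k0 !mulr0.
Qed.
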